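(* Let $(R,\mathfrak{m},k)$ be a Noetherian local ring and let $\varphi$ be a finite local self-map of $R$. Then the sequence $\{(\log\nu(\varphi^n_*R))/n\}_{n\ge1}$ converges to its infimum $\nu_\infty$, and $$\nu_\infty=\log[\varphi_*k:k]+h_{\mathrm{alg}}(\varphi,R).$$
   Context: A self-map is a ring endomorphism; $\varphi^n$ is the $n$-fold composition; ''finite'' means $R$ is finitely generated as a module via $\varphi$. $\varphi^n_*R$ is $R$ viewed as an $R$-module via $\varphi^n$ (restriction of scalars), and $\nu(M)$ is the minimal number of generators of a finite module $M$. $[\varphi_*k:k]$ is the $k$-dimension of $k$ viewed as a $k$-vector space via $\varphi$. For a local self-map $\psi$ with $\psi(\mathfrak{m})R$ $\mathfrak{m}$-primary, $\lambda(\psi):=\ell_R(R/\psi(\mathfrak{m})R)$, and the algebraic entropy is $h_{\mathrm{alg}}(\varphi,R):=\lim_{n\to\infty}\frac{1}{n}\log\lambda(\varphi^n)$ (this limit exists for any such self-map; finite local self-maps have this property). *)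

From HB Require Import structures.
From mathcomp Require Import all_boot all_order all_algebra.
From Stdlib Require Import Reals ClassicalEpsilon.

Set Implicit Arguments.
Unset Strict Implicit.
Unset Printing Implicit Defensive.

Import GRing.Theory.

Section Defs.
Variable A : comUnitRingType.
Local Open Scope ring_scope.

Definition is_ideal (I : A -> Prop) : Prop :=
  I 0 /\ (forall x y, I x -> I y -> I (x + y)) /\ (forall r x, I x -> I (r * x)).

Definition ideal_gen (s : seq A) (x : A) : Prop :=
  exists c : nat -> A, x = \sum_(i < size s) c i * s`_i.

Definition noetherian : Prop :=
  forall I : A -> Prop, is_ideal I ->
    exists s : seq A, forall x, I x <-> ideal_gen s x.

Definition local_max (m : A -> Prop) : Prop :=
  is_ideal m /\ ~ m 1 /\ (forall x, ~ m x -> x \is a GRing.unit).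

Definition local_map (m : A -> Prop) (f : A -> A) : Prop :=
  forall x, m x -> m (f x).

(* s generates f_* A as an A-module (A acting through f) *)
Definition gens_via (f : A -> A) (s : seq A) : Prop :=
  forall x : A, exists c : nat -> A, x = \sum_(i < size s) f (c i) * s`_i.

Definition finite_map (f : A -> A) : Prop := exists s, gens_via f s.

Definition is_nu (f : A -> A) (n : nat) : Prop :=
  (exists s, size s = n /\ gens_via f s) /\
  (forall s, gens_via f s -> leq n (size s)).

Definition nu (f : A -> A) : nat :=
  epsilon (inhabits O) (is_nu f).

(* s spans k = A/m as a k-vector space with k acting through f *)
Definition res_spans (m : A -> Prop) (f : A -> A) (s : seq A) : Prop :=
  forall x : A, exists c : nat -> A,
    m (x - \sum_(i < size s) f (c i) * s`_i).

(* n = [f_* k : k], the dimension = minimal size of a spanning set *)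
Definition is_res_deg (m : A -> Prop) (f : A -> A) (n : nat) : Prop :=
  (exists s, size s = n /\ res_spans m f s) /\
  (forall s, res_spans m f s -> leq n (size s)).

Definition res_deg (m : A -> Prop) (f : A -> A) : nat :=
  epsilon (inhabits O) (is_res_deg m f).

Definition ext_ideal (m : A -> Prop) (f : A -> A) (x : A) : Prop :=
  exists (n : nat) (r y : nat -> A),
    (forall i, m (y i)) /\ x = \sum_(i < n) r i * f (y i).

(* a strict chain of ideals I = J 0 < J 1 < ... < J n = A;
   these are exactly the chains of submodules of A/I *)
Definition ideal_chain (I : A -> Prop) (J : nat -> A -> Prop) (n : nat) : Prop :=
  (forall i, is_ideal (J i)) /\
  (forall x, J O x <-> I x) /\
  (forall x, J n x) /\
  (forall i, leq i.+1 n ->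
     (forall x, J i x -> J i.+1 x) /\ exists x, J i.+1 x /\ ~ J i x).

Definition is_length_quot (I : A -> Prop) (n : nat) : Prop :=
  (exists J, ideal_chain I J n) /\
  (forall J k, ideal_chain I J k -> leq k n).

Definition length_quot (I : A -> Prop) : nat :=
  epsilon (inhabits O) (is_length_quot I).

Definition lambda (m : A -> Prop) (f : A -> A) : nat :=
  length_quot (ext_ideal m f).

End Defs.

(* Write d = [phi_* k : k].  The proof rests on the exact formula
        nu(phi^n_* A) = lambda(phi^n) * d^n                       (nu_iter)
   after which everything is real analysis: log nu(phi^n) is subadditive
   (generators of phi^p_* A and phi^q_* A multiply to generators of
   phi^(p+q)_* A), so by Fekete's lemma log nu(phi^n)/n converges to its
   infimum, and log lambda(phi^n)/n = log nu(phi^n)/n - log d.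

   The formula nu(f_* A) = lambda(f) * [f_* k : k] (nu_lambda) is proved for
   any finite local self-map f and any basis b of k over f:
   - (<=) along a chain f(m)A = J_0 < ... < J_L = A of maximal length every
     step is simple, J_(i+1) = J_i + A x_i with m x_i in J_i; the products
     b_j x_i then span A modulo f(m)A, hence generate f_* A by Nakayama;
   - (>=) for any such chain the products b_j x_i are independent modulo
     f(m)A, so by the Steinitz exchange lemma no generating set is smaller.
   The tower law for spanning and independent families gives a basis of k
   over phi^n of size d^n. *)

From HB Require Import structures.
From mathcomp Require Import all_boot all_order all_algebra.
From Stdlib Require Import Reals.
From Stdlib Require Import Lra ClassicalEpsilon Classical.
From Stdlib Require Wf_nat.
From mathcomp Require Import zify.
From mathcomp Require algebra_tactics.ring.

Set Implicit Arguments.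
Unset Strict Implicit.
Unset Printing Implicit Defensive.

Import GRing.Theory.
Local Open Scope ring_scope.

(* Unlike
   [{rmorphism A -> A}], this is a property of a plain function, so it applies
   directly to the iterates [iter n phi] and to composites. *)
Definition ring_map (A : comUnitRingType) (f : A -> A) : Prop :=
  (forall x y, f (x + y) = f x + f y) /\
  (forall x y, f (x * y) = f x * f y) /\ f 1 = 1.

Section RingMaps.
Variables (A : comUnitRingType) (f : A -> A).
Hypothesis hf : ring_map f.

Lemma ring_map0 : f 0 = 0.
Proof. by have [fD _] := hf; apply: (addrI (f 0)); rewrite -fD !addr0. Qed.

Lemma ring_mapN x : f (- x) = - f x.
Proof. by have [fD _] := hf; apply/eqP; rewrite -subr_eq0 opprK -fD addNr ring_map0. Qed.

Lemma ring_map_sum n (F : nat -> A) : f (\sum_(i < n) F i) = \sum_(i < n) f (F i).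
Proof.
have [fD _] := hf; elim: n => [|n IH]; first by rewrite !big_ord0 ring_map0.
by rewrite !big_ord_recr /= fD IH.
Qed.

End RingMaps.

Lemma ring_map_comp (A : comUnitRingType) (g h : A -> A) :
  ring_map g -> ring_map h -> ring_map (fun x => g (h x)).
Proof.
move=> [gD [gM g1]] [hD [hM h1]]; split; [|split].
- by move=> x y; rewrite hD gD.
- by move=> x y; rewrite hM gM.
- by rewrite h1 g1.
Qed.

Lemma ring_map_iter (A : comUnitRingType) (phi : {rmorphism A -> A}) n :
  ring_map (iter n phi).
Proof.
elim: n => [|n IH]; first by [].
apply: ring_map_comp IH; split; [exact: rmorphD | split; [exact: rmorphM | exact: rmorph1]].
Qed.

Lemma sum_closed (A : comUnitRingType) (P : A -> Prop) (n : nat) (F : nat -> A) :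
  P 0 -> (forall x y, P x -> P y -> P (x + y)) ->
  (forall i : nat, (i < n)%nat -> P (F i)) -> P (\sum_(i < n) F i).
Proof.
move=> P0 PD; elim: n => [|n IH] PF; first by rewrite big_ord0.
rewrite big_ord_recr /=; apply: PD; last exact: PF.
by apply: IH => i lt_in; apply: PF; apply: ltnW.
Qed.

Section Ideals.
Variables (A : comUnitRingType) (J : A -> Prop).
Hypothesis hJ : is_ideal J.

Lemma ideal0 : J 0. Proof. by case: hJ. Qed.

Lemma idealD x y : J x -> J y -> J (x + y).
Proof. by case: hJ => [_ [H _]]; apply: H. Qed.

Lemma idealMl r x : J x -> J (r * x).
Proof. by case: hJ => [_ [_ H]]; apply: H. Qed.

Lemma idealMr r x : J x -> J (x * r).
Proof. by rewrite mulrC; apply: idealMl. Qed.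

Lemma idealN x : J x -> J (- x).
Proof. by rewrite -mulN1r; apply: idealMl. Qed.

Lemma idealB x y : J x -> J y -> J (x - y).
Proof. by move=> Jx Jy; apply: idealD => //; apply: idealN. Qed.

Lemma ideal_sum (n : nat) (F : nat -> A) :
  (forall i : nat, (i < n)%nat -> J (F i)) -> J (\sum_(i < n) F i).
Proof. by apply: sum_closed; [apply: ideal0 | apply: idealD]. Qed.

End Ideals.

Definition zero_ideal (A : comUnitRingType) (x : A) : Prop := x = 0.

Lemma zero_ideal_ideal (A : comUnitRingType) : is_ideal (@zero_ideal A).
Proof.
rewrite /zero_ideal; split; [done | split] => [x y -> -> | r x ->];
  by rewrite ?addr0 ?mulr0.
Qed.

Section LocalRing.
Variables (A : comUnitRingType) (m : A -> Prop).
Hypothesis Hm : local_max m.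

Lemma max_ideal : is_ideal m. Proof. by case: Hm. Qed.

Lemma max_not1 : ~ m 1. Proof. by case: Hm => [_ []]. Qed.

Lemma max_unit x : ~ m x -> x \is a GRing.unit.
Proof. by case: Hm => [_ [_ H]]; apply: H. Qed.

Lemma unit_1Bmax c : m c -> 1 - c \is a GRing.unit.
Proof.
move=> mc; apply: max_unit => m1c; apply: max_not1.
by rewrite -(subrK c 1); apply: (idealD max_ideal).
Qed.

End LocalRing.

(* This treats A as
   the module f_*A: scalars act through f.  With J = 0 it is ordinary
   generation of f_*A (see [gens_spanE]); with J = m it is spanning of the
   residue field k, so [res_spans m f s] is [forall x, span f m s x]. *)
Definition span (A : comUnitRingType) (f : A -> A) (J : A -> Prop) (s : seq A)
    (x : A) : Prop :=
  exists c : nat -> A, J (x - \sum_(i < size s) f (c i) * s`_i).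

Lemma gens_spanE (A : comUnitRingType) (f : A -> A) (s : seq A) :
  gens_via f s <-> forall x, span f (@zero_ideal A) s x.
Proof.
split=> gen x; have [c xE] := gen x; exists c.
  by rewrite /zero_ideal xE subrr.
by apply/eqP; rewrite -subr_eq0; apply/eqP.
Qed.

Lemma span_ext (A : comUnitRingType) (f g : A -> A) J s x :
  f =1 g -> span f J s x -> span g J s x.
Proof. by move=> fg [c Jc]; exists c; under eq_bigr do rewrite -fg. Qed.

Lemma span_mono (A : comUnitRingType) (f : A -> A) (J K : A -> Prop) s x :
  (forall y, J y -> K y) -> span f J s x -> span f K s x.
Proof. by move=> JK [c Jc]; exists c; apply: JK. Qed.

Section SpanModule.
Variables (A : comUnitRingType) (f : A -> A) (J : A -> Prop).
Hypotheses (hf : ring_map f) (hJ : is_ideal J).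

Lemma span_ideal s x : J x -> span f J s x.
Proof.
move=> Jx; exists (fun _ => 0).
by rewrite big1 ?subr0 // => i _; rewrite ring_map0 // mul0r.
Qed.

Lemma spanD s x y : span f J s x -> span f J s y -> span f J s (x + y).
Proof.
move=> [c Jc] [d Jd]; exists (fun i => c i + d i).
have [fD _] := hf; under eq_bigr do rewrite fD mulrDl.
by rewrite big_split /= opprD addrACA; apply: idealD.
Qed.

Lemma spanZ s a x : span f J s x -> span f J s (f a * x).
Proof.
move=> [c Jc]; exists (fun i => a * c i).
have [_ [fM _]] := hf; under eq_bigr do rewrite fM -mulrA.
by rewrite -mulr_sumr -mulrBr; apply: idealMl.
Qed.

Lemma spanN s x : span f J s x -> span f J s (- x).
Proof.
have [_ [_ f1]] := hf.
by move=> Sx; rewrite -mulN1r -f1 -ring_mapN //; apply: spanZ.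
Qed.

Lemma spanB s x y : span f J s x -> span f J s y -> span f J s (x - y).
Proof. by move=> Sx Sy; apply: spanD => //; apply: spanN. Qed.

Lemma sum_delta (s : seq A) (i : nat) : (i < size s)%nat ->
  \sum_(k < size s) f ((k == i :> nat)%:R) * s`_k = s`_i.
Proof.
move=> lt_is; have [_ [_ f1]] := hf.
rewrite (bigD1 (Ordinal lt_is)) //= eqxx f1 mul1r big1 ?addr0 // => k neq_ki.
have /negbTE -> : (k : nat) != i by apply: contra neq_ki => /eqP eq_ki; apply/eqP/val_inj.
by rewrite ring_map0 // mul0r.
Qed.

Lemma span_nth s i : (i < size s)%nat -> span f J s s`_i.
Proof.
move=> lt_is; exists (fun k => (k == i)%:R).
by rewrite sum_delta // subrr; apply: ideal0.
Qed.

Lemma span_sum s (n : nat) (F : nat -> A) :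
  (forall i : nat, (i < n)%nat -> span f J s (F i)) -> span f J s (\sum_(i < n) F i).
Proof. by apply: sum_closed; [apply: span_ideal; apply: ideal0 | apply: spanD]. Qed.

Lemma span_trans s t x :
  (forall i : nat, (i < size t)%nat -> span f J s t`_i) ->
  span f J t x -> span f J s x.
Proof.
move=> St [c Jc]; rewrite -(subrK (\sum_(i < size t) f (c i) * t`_i) x).
apply: spanD; first exact: span_ideal.
by apply: (span_sum (F := fun i => f (c i) * t`_i)) => i lt_it; apply: spanZ; apply: St.
Qed.

End SpanModule.

(* The grid sequence [G i j] (i < p, j < q), listed in row-major order: the
   entry (i, j) sits at position i * q + j.  Products of generating families
   (the "tower law") are built from such grids. *)
Definition grid (T : Type) (p q : nat) (G : nat -> nat -> T) : seq T :=
  mkseq (fun k => G (k %/ q)%nat (k %% q)%nat) (p * q).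

Lemma size_grid (T : Type) p q (G : nat -> nat -> T) : size (grid p q G) = (p * q)%nat.
Proof. by rewrite size_mkseq. Qed.

Lemma grid_pos_lt (p q i j : nat) : (i < p)%nat -> (j < q)%nat -> (i * q + j < p * q)%nat.
Proof. by move=> lt_ip lt_jq; nia. Qed.

Lemma grid_pos (p q k : nat) : (k < p * q)%nat ->
  [/\ (k %/ q < p)%nat, (k %% q < q)%nat & k = (k %/ q * q + k %% q)%nat].
Proof.
move=> lt_kpq; have q_gt0 : (0 < q)%nat by case: q lt_kpq; rewrite ?muln0.
by rewrite ltn_divLR // ltn_mod q_gt0 -divn_eq.
Qed.

Lemma nth_grid (A : comUnitRingType) p q (G : nat -> nat -> A) i j :
  (i < p)%nat -> (j < q)%nat -> (grid p q G)`_(i * q + j) = G i j.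
Proof.
move=> lt_ip lt_jq; have q_gt0 : (0 < q)%nat by apply: leq_ltn_trans lt_jq.
rewrite nth_mkseq; last exact: grid_pos_lt.
by rewrite divnMDl // divn_small // addn0 modnMDl modn_small.
Qed.

Lemma sum_ord_mul (A : comUnitRingType) (p q : nat) (H : nat -> A) :
  \sum_(k < p * q) H k = \sum_(i < p) \sum_(j < q) H (i * q + j)%nat.
Proof.
elim: p H => [|p IH] H; first by rewrite mul0n !big_ord0.
rewrite mulSn big_split_ord /= big_ord_recl (IH (fun k => H (q + k)%nat)).
by congr (_ + _); apply: eq_bigr => i _; apply: eq_bigr => j _; rewrite mulSn addnA.
Qed.

Lemma sum_grid (A : comUnitRingType) p q (G : nat -> nat -> A) (F : nat -> A) :
  \sum_(k < size (grid p q G)) F k * (grid p q G)`_k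
  = \sum_(i < p) \sum_(j < q) F (i * q + j)%nat * G i j.
Proof.
rewrite size_grid (sum_ord_mul p q (fun k => F k * (grid p q G)`_k)).
by apply: eq_bigr => i _; apply: eq_bigr => j _; rewrite nth_grid.
Qed.

Section TowerSpan.
Variables (A : comUnitRingType) (g h : A -> A) (J : A -> Prop).
Hypotheses (hg : ring_map g) (hh : ring_map h) (hJ : is_ideal J).
Hypothesis gJ : forall y a, J y -> J (g y * a).
Variables (t s : seq A).
Hypotheses (St : forall x, span g J t x) (Ss : forall x, span h J s x).

Let T := grid (size t) (size s) (fun i j => g s`_j * t`_i).

Lemma tower_span_term a i : (i < size t)%nat -> span (fun y => g (h y)) J T (g a * t`_i).
Proof.
move=> lt_it; have hgh := ring_map_comp hg hh; have [gD [gM _]] := hg.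
have [d Jd] := Ss a; set u := \sum_(j < size s) _ in Jd.
have uE : g u * t`_i = \sum_(j < size s) g (h (d j)) * T`_(i * size s + j).
  rewrite /u (ring_map_sum hg _ (fun j => h (d j) * s`_j)) mulr_suml.
  apply: eq_bigr => j _.
  by rewrite nth_grid // gM mulrA.
rewrite -(subrK u a) gD mulrDl uE; apply: spanD => //; first by apply: span_ideal => //; apply: gJ.
apply: (span_sum hgh hJ (F := fun j => g (h (d j)) * T`_(i * size s + j))) => // j lt_js.
by apply: spanZ => //; apply: span_nth => //; rewrite size_grid grid_pos_lt.
Qed.

Lemma tower_span x : span (fun y => g (h y)) J T x.
Proof.
have hgh := ring_map_comp hg hh; have [c Jc] := St x.
rewrite -(subrK (\sum_(i < size t) g (c i) * t`_i) x).
apply: spanD => //; first exact: span_ideal.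
by apply: (span_sum hgh hJ (F := fun i => g (c i) * t`_i)) => // i; apply: tower_span_term.
Qed.

End TowerSpan.

(* [indep m f J s]: the images of s in A/J are linearly independent over the
   residue field, scalars acting through f: every relation sum f(c_i) s_i in J
   has all its coefficients c_i in m. *)
Definition indep (A : comUnitRingType) (m : A -> Prop) (f : A -> A) (J : A -> Prop)
    (s : seq A) : Prop :=
  forall c : nat -> A, J (\sum_(i < size s) f (c i) * s`_i) ->
  forall i : nat, (i < size s)%nat -> m (c i).

Lemma tower_indep (A : comUnitRingType) (m : A -> Prop) (g h : A -> A) (t s : seq A) :
  ring_map g -> indep m g m t -> indep m h m s ->
  indep m (fun y => g (h y)) m (grid (size t) (size s) (fun i j => g s`_j * t`_i)).
Proof.
move=> hg It Is c mc k; rewrite size_grid => /grid_pos [lt_i lt_j ->].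
move: mc; rewrite (sum_grid _ _ _ (fun k => g (h (c k)))).
have [_ [gM _]] := hg.
set q := size s; set C := fun i j => c (i * q + j)%nat.
have -> : \sum_(i < size t) \sum_(j < q) g (h (C i j)) * (g s`_j * t`_i)
    = \sum_(i < size t) g (\sum_(j < q) h (C i j) * s`_j) * t`_i.
  apply: eq_bigr => i _; rewrite (ring_map_sum hg _ (fun j => h (C i j) * s`_j)).
  by rewrite mulr_suml; apply: eq_bigr => j _; rewrite gM mulrA.
move/(It (fun i => \sum_(j < q) h (C i j) * s`_j)) => /(_ _ lt_i).
by move/(Is (C (k %/ q)%nat)); apply.
Qed.

Definition drop_at (T : Type) (x0 : T) (j : nat) (s : seq T) : seq T :=
  mkseq (fun i => nth x0 s (bump j i)) (size s).-1.

Lemma size_drop_at (T : Type) (x0 : T) j s : size (drop_at x0 j s) = (size s).-1.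
Proof. exact: size_mkseq. Qed.

Lemma nth_drop_at (T : Type) (x0 : T) j s i :
  (i < (size s).-1)%nat -> nth x0 (drop_at x0 j s) i = nth x0 s (bump j i).
Proof. exact: nth_mkseq. Qed.

Lemma nth_drop_at_unbump (T : Type) (x0 : T) j s k :
  (j < size s)%nat -> (k < size s)%nat -> k != j ->
  (unbump j k < (size s).-1)%nat /\ nth x0 s k = nth x0 (drop_at x0 j s) (unbump j k).
Proof.
move=> lt_js lt_ks neq_kj; have lt_u : (unbump j k < (size s).-1)%nat.
  by move: neq_kj; rewrite /unbump neq_ltn; case: (ltnP j k) => /=; lia.
by split=> //; rewrite nth_drop_at // unbumpK // inE.
Qed.

Lemma sum_split_at (A : comUnitRingType) (n j : nat) (F : nat -> A) : (j < n)%nat ->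
  \sum_(k < n) F k = F j + \sum_(i < n.-1) F (bump j i).
Proof. by case: n => [//|n] lt_jn; rewrite (bigD1_ord (Ordinal lt_jn)). Qed.

Section Independence.
Variables (A : comUnitRingType) (m : A -> Prop).
Hypothesis Hm : local_max m.
Variables (f : A -> A) (J : A -> Prop).
Hypotheses (hf : ring_map f) (hJ : is_ideal J).

Lemma span_drop_dependent (s : seq A) (c : nat -> A) (j : nat) :
  J (\sum_(i < size s) f (c i) * s`_i) -> (j < size s)%nat -> ~ m (c j) ->
  forall x, span f J s x -> span f J (drop_at 0 j s) x.
Proof.
move=> Jc lt_js /(max_unit Hm) uc x Sx; have [_ [fM f1]] := hf.
apply: (span_trans hf hJ _ Sx) => k lt_ks; case: (eqVneq k j) => [-> {k lt_ks} | neq_kj].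
  set s' := drop_at 0 j s; set n := (size s).-1.
  rewrite (sum_split_at (fun i => f (c i) * s`_i) lt_js) in Jc.
  have -> : s`_j = f (c j)^-1 * (f (c j) * s`_j + \sum_(i < n) f (c (bump j i)) * s`_(bump j i))
      - \sum_(i < n) f ((c j)^-1 * c (bump j i)) * s'`_i.
    rewrite mulrDr mulrA -fM mulVr // f1 mul1r mulr_sumr -addrA [X in _ + X](_ : _ = 0) ?addr0 //.
    apply/eqP; rewrite subr_eq0; apply/eqP; apply: eq_bigr => i _.
    by rewrite nth_drop_at // fM mulrA.
  apply: spanB => //; first by apply: span_ideal => //; apply: idealMl.
  apply: (span_sum hf hJ (F := fun i => f ((c j)^-1 * c (bump j i)) * s'`_i)) => i lt_in.
  by apply: spanZ => //; apply: span_nth => //; rewrite size_drop_at.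
have [lt_u ->] := nth_drop_at_unbump 0 lt_js lt_ks neq_kj.
by apply: span_nth => //; rewrite size_drop_at.
Qed.

Lemma minimal_span_indep (s : seq A) :
  (forall x, span f J s x) ->
  (forall s', (forall x, span f J s' x) -> (size s <= size s')%nat) ->
  indep m f J s.
Proof.
move=> Ss min_s c Jc j lt_js; apply: NNPP => nmc.
have := min_s _ (fun x => span_drop_dependent Jc lt_js nmc (Ss x)).
by rewrite size_drop_at; case: (size s) lt_js => //= n _; rewrite ltnn.
Qed.

End Independence.

Section Steinitz.
Variables (A : comUnitRingType) (m : A -> Prop).
Hypothesis Hm : local_max m.
Variables (f : A -> A) (J : A -> Prop).
Hypotheses (hf : ring_map f) (hJ : is_ideal J).
Hypothesis fmJ : forall c x, m c -> J (f c * x).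

Lemma indep_nth_notin (t : seq A) i : indep m f J t -> (i < size t)%nat -> ~ J t`_i.
Proof.
move=> It lt_it Jt; apply: (max_not1 Hm).
have := It (fun k => (k == i)%:R); rewrite sum_delta // => /(_ Jt i lt_it).
by rewrite eqxx.
Qed.

Lemma span_cons s0 s x : span f J (s0 :: s) x -> exists a, span f J s (x - f a * s0).
Proof.
move=> [c Jc]; exists (c 0%nat); exists (fun k => c k.+1).
by move: Jc; rewrite /= big_ord_recl /= opprD addrA.
Qed.

(* The exchange step: t_i = f(a_i) s0 + (span of s), with a_{j0} a unit.
   Eliminating s0 with the help of t_{j0} yields a sequence t' one shorter,
   spanned by s, and independent when t is. *)
Section Exchange.
Variables (s0 : A) (s t : seq A) (a : nat -> A) (j0 : nat).
Hypothesis St : forall i : nat, (i < size t)%nat -> span f J s (t`_i - f (a i) * s0).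
Hypothesis lt_j0 : (j0 < size t)%nat.

Let r i := a (bump j0 i) / a j0.
Let t' := mkseq (fun i => t`_(bump j0 i) - f (r i) * t`_j0) (size t).-1.

Lemma lt_bump i : (i < (size t).-1)%nat -> (bump j0 i < size t)%nat.
Proof. by rewrite /bump; case: (size t) lt_j0 => // n; case: leqP => /=; lia. Qed.

Lemma exchange_span : a j0 \is a GRing.unit ->
  forall i : nat, (i < size t')%nat -> span f J s t'`_i.
Proof.
move=> ua i; rewrite size_mkseq => lt_i; rewrite nth_mkseq //; have [_ [fM _]] := hf.
have faE : f (r i) * f (a j0) = f (a (bump j0 i)) by rewrite -fM divrK.
have -> : t`_(bump j0 i) - f (r i) * t`_j0 =
    (t`_(bump j0 i) - f (a (bump j0 i)) * s0) - f (r i) * (t`_j0 - f (a j0) * s0).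
  by rewrite mulrBr mulrA faE opprB addrA subrK.
by apply: spanB => //; [apply: St; apply: lt_bump | apply: spanZ => //; apply: St].
Qed.

(* A relation among t' is a relation among t. *)
Let cc (c' : nat -> A) k :=
  if k == j0 then - \sum_(i < (size t).-1) c' i * r i else c' (unbump j0 k).

Lemma exchange_relation (c' : nat -> A) :
  \sum_(k < size t) f (cc c' k) * t`_k = \sum_(i < size t') f (c' i) * t'`_i.
Proof.
have [_ [fM _]] := hf; rewrite size_mkseq (sum_split_at (fun k => f (cc c' k) * t`_k) lt_j0).
have -> : \sum_(i < (size t).-1) f (cc c' (bump j0 i)) * t`_(bump j0 i)
    = \sum_(i < (size t).-1) f (c' i) * t`_(bump j0 i).
  by apply: eq_bigr => i _; rewrite /cc eq_sym (negbTE (neq_bump j0 i)) bumpK.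
rewrite /cc eqxx ring_mapN // (ring_map_sum hf _ (fun i => c' i * r i)) mulNr mulr_suml.
rewrite addrC -sumrB; apply: eq_bigr => i _.
by rewrite nth_mkseq ?ltn_ord // fM mulrBr mulrA.
Qed.

Lemma exchange_indep : indep m f J t -> indep m f J t'.
Proof.
move=> It c' Jc' i; rewrite size_mkseq => lt_i.
have := It (cc c'); rewrite exchange_relation => /(_ Jc' _ (lt_bump lt_i)).
by rewrite /cc eq_sym (negbTE (neq_bump j0 i)) bumpK.
Qed.

End Exchange.

Lemma steinitz (s t : seq A) :
  (forall i : nat, (i < size t)%nat -> span f J s t`_i) ->
  indep m f J t -> (size t <= size s)%nat.
Proof.
elim: s t => [|s0 s IH] t St It.
  case: (posnP (size t)) => [-> // | t_gt0].
  have [c] := St 0%nat t_gt0; rewrite big_ord0 subr0 => Jt.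
  by case: (indep_nth_notin It t_gt0 Jt).
have [a Sa] : exists a : nat -> A,
    forall i : nat, (i < size t)%nat -> span f J s (t`_i - f (a i) * s0).
  apply: (ClassicalEpsilon.choice
    (fun i a => (i < size t)%nat -> span f J s (t`_i - f a * s0))) => i.
  case: (ltnP i (size t)) => [lt_it | _]; last by exists 0.
  by have [a Sa] := span_cons (St i lt_it); exists a.
case: (classic (exists2 j, (j < size t)%nat & ~ m (a j))) => [[j0 lt_j0 /(max_unit Hm) ua] | all_m].
  have := IH _ (exchange_span Sa lt_j0 ua) (exchange_indep (a := a) lt_j0 It).
  rewrite size_mkseq /=; lia.
apply: leqW; apply: IH => // i lt_it.
rewrite -(subrK (f (a i) * s0) t`_i); apply: spanD => //; first exact: Sa.
apply: span_ideal => //; apply: fmJ; apply: NNPP => nm; apply: all_m; by exists i.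
Qed.

End Steinitz.

Section ExtendedIdeal.
Variables (A : comUnitRingType) (m : A -> Prop).
Hypothesis Hm : local_max m.
Variable f : A -> A.

Lemma ext_ideal_ideal : is_ideal (ext_ideal m f).
Proof.
split.
  exists 0%nat, (fun _ => 0), (fun _ => 0); rewrite big_ord0.
  by split=> // _; apply: ideal0 (max_ideal Hm).
split=> [x y [n1 [r1 [y1 [m1 ->]]]] [n2 [r2 [y2 [m2 ->]]]] | r x [n [r' [y [my ->]]]]].
  exists (n1 + n2)%nat, (fun i => if (i < n1)%nat then r1 i else r2 (i - n1)%nat),
    (fun i => if (i < n1)%nat then y1 i else y2 (i - n1)%nat).
  split; first by move=> i; case: ifP.
  rewrite big_split_ord /=; congr (_ + _); apply: eq_bigr => i _; first by rewrite ltn_ord.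
  by rewrite ltnNge leq_addr /= addKn.
exists n, (fun i => r * r' i), y; split => //.
by rewrite mulr_sumr; apply: eq_bigr => i _; rewrite mulrA.
Qed.

Lemma ext_ideal_gen c x : m c -> ext_ideal m f (f c * x).
Proof. by move=> mc; exists 1%nat, (fun _ => x), (fun _ => c); rewrite big_ord1 mulrC. Qed.

Lemma ext_ideal_max : local_map m f -> forall x, ext_ideal m f x -> m x.
Proof.
move=> floc x [n [r [y [my ->]]]].
apply: (ideal_sum (max_ideal Hm) (F := fun i => r i * f (y i))) => i _.
by apply: (idealMl (max_ideal Hm)); apply: floc.
Qed.

End ExtendedIdeal.

(* Nakayama's lemma for the module f_*A, proved by eliminating generators
   one at a time (the determinant trick in triangular form). *)
Section Nakayama.
Import mathcomp.algebra_tactics.ring.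
Variables (A : comUnitRingType) (m : A -> Prop).
Hypothesis Hm : local_max m.
Variable f : A -> A.
Hypothesis hf : ring_map f.

Variable N : A -> Prop.
Hypotheses (N0 : N 0) (ND : forall x y, N x -> N y -> N (x + y))
  (NZ : forall a x, N x -> N (f a * x)).

Definition m_comb (g : nat -> A) (r : nat) (x : A) : Prop :=
  exists S (c : nat -> A), [/\ N S, forall l, m (c l) & x = S + \sum_(l < r) f (c l) * g l].

Lemma m_comb_closed g r x : m_comb g r x -> (forall l : nat, (l < r)%nat -> N (g l)) -> N x.
Proof.
move=> [S [c [NS _ ->]]] Ng; apply: ND => //.
by apply: (sum_closed (F := fun l => f (c l) * g l)) => // l lt_lr; apply: NZ; apply: Ng.
Qed.

(* Solving for the last generator: g_r = S + sum_{l <= r} f(c_l) g_l with c_r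
   in m gives g_r = f(1 - c_r)^-1 (S + sum_{l < r} f(c_l) g_l). *)
Lemma m_comb_last g r : m_comb g r.+1 (g r) -> m_comb g r (g r).
Proof.
move=> [S [c [NS mc gE]]]; have [fD [fM f1]] := hf.
have uu := unit_1Bmax Hm (mc r); set v := (1 - c r)^-1.
exists (f v * S), (fun l => v * c l); split; first exact: NZ.
  by move=> l; apply: (idealMl (max_ideal Hm)).
have fuE : f (1 - c r) * g r = S + \sum_(l < r) f (c l) * g l.
  by rewrite fD f1 ring_mapN // mulrBl mul1r {1}gE big_ord_recr /=; ring.
under eq_bigr do rewrite fM -mulrA.
by rewrite -mulr_sumr -mulrDr -fuE mulrA -fM mulVr // f1 mul1r.
Qed.

Lemma m_comb_subst g r x : m_comb g r (g r) -> m_comb g r.+1 x -> m_comb g r x.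
Proof.
move=> [S' [c' [NS' mc' gE]]] [S [c [NS mc ->]]]; have [fD [fM _]] := hf.
exists (S + f (c r) * S'), (fun l => c l + c r * c' l); split.
- by apply: ND => //; apply: NZ.
- by move=> l; apply: (idealD (max_ideal Hm)) => //; apply: (idealMl (max_ideal Hm)).
rewrite big_ord_recr /= gE.
under [in RHS]eq_bigr do rewrite fD fM mulrDl -mulrA.
by rewrite big_split /= -mulr_sumr; ring.
Qed.

Lemma nakayama_elim (g : nat -> A) (r : nat) :
  (forall i : nat, (i < r)%nat -> m_comb g r (g i)) -> forall i : nat, (i < r)%nat -> N (g i).
Proof.
elim: r => [//|r IH] comb.
have last_g := m_comb_last (comb r (ltnSn r)).
have Ng : forall i : nat, (i < r)%nat -> N (g i).
  by apply: IH => i lt_ir; apply: m_comb_subst last_g (comb i (ltnW lt_ir)).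
move=> i; rewrite ltnS leq_eqVlt => /predU1P [-> | ]; last exact: Ng.
exact: m_comb_closed last_g Ng.
Qed.

End Nakayama.

Section NakayamaGenerators.
Variables (A : comUnitRingType) (m : A -> Prop).
Hypothesis Hm : local_max m.
Variable f : A -> A.
Hypothesis hf : ring_map f.

Lemma ext_ideal_comb (g : seq A) y : gens_via f g -> ext_ideal m f y ->
  exists c : nat -> A, (forall l, m (c l)) /\ y = \sum_(l < size g) f (c l) * g`_l.
Proof.
move=> gen_g [n [r [y' [my ->]]]]; have [_ [fM _]] := hf.
have [a aE] := ClassicalEpsilon.choice
  (fun k (a : nat -> A) => r k = \sum_(l < size g) f (a l) * g`_l) (fun k => gen_g (r k)).
exists (fun l => \sum_(k < n) a k l * y' k); split.
  move=> l; apply: (ideal_sum (max_ideal Hm) (F := fun k => a k l * y' k)) => k _.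
  exact: (idealMl (max_ideal Hm)).
under [in RHS]eq_bigr => l _ do rewrite (ring_map_sum hf _ (fun k => a k l * y' k)) mulr_suml.
rewrite exchange_big /=; apply: eq_bigr => k _.
by rewrite aE mulr_suml; apply: eq_bigr => l _; rewrite fM mulrAC.
Qed.

Lemma nakayama (g s : seq A) : gens_via f g ->
  (forall x, span f (ext_ideal m f) s x) -> gens_via f s.
Proof.
move=> gen_g Ss; apply/gens_spanE; have hZ := zero_ideal_ideal A.
have Ng : forall i : nat, (i < size g)%nat -> span f (@zero_ideal A) s g`_i.
  apply: (nakayama_elim Hm hf (span_ideal hf s (ideal0 hZ)) (spanD hf hZ (s := s))
    (spanZ hf hZ (s := s)) (g := fun i => g`_i) (r := size g)) => i _.
  have [b Jb] := Ss g`_i; have [c [mc cE]] := ext_ideal_comb gen_g Jb.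
  exists (\sum_(j < size s) f (b j) * s`_j), c; split => //; last by rewrite -cE addrC subrK.
  apply: (span_sum hf hZ (F := fun j => f (b j) * s`_j)) => j lt_js.
  by apply: spanZ => //; apply: span_nth.
move=> x; have [c ->] := gen_g x.
by apply: (span_sum hf hZ (F := fun i => f (c i) * g`_i)) => i lt_ig; apply: spanZ => //; apply: Ng.
Qed.

End NakayamaGenerators.

Section ChainBound.
Variables (A : comUnitRingType) (m : A -> Prop).
Hypothesis Hm : local_max m.
Variable f : A -> A.

Lemma chain_mono (I : A -> Prop) (J : nat -> A -> Prop) (L : nat) : ideal_chain I J L ->
  forall i j : nat, (i <= j <= L)%nat -> forall x, J i x -> J j x.
Proof.
move=> [_ [_ [_ step]]] i j /andP [le_ij le_jL]; elim: j le_ij le_jL => [|j IH].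
  by rewrite leqn0 => /eqP ->.
rewrite leq_eqVlt => /predU1P [-> // | lt_ij] lt_jL x Jx.
by apply: (step j lt_jL).1; apply: IH => //; apply: ltnW.
Qed.

Lemma indep_mul (K : A -> Prop) (t : seq A) (x : A) (c : nat -> A) : is_ideal K ->
  indep m f m t -> ~ K x -> K (\sum_(j < size t) f (c j) * (t`_j * x)) ->
  forall j : nat, (j < size t)%nat -> m (c j).
Proof.
move=> hK It notKx; under eq_bigr do rewrite mulrA; rewrite -mulr_suml => Kx.
apply: It; apply: NNPP => /(max_unit Hm) uu; apply: notKx.
by rewrite -(mulKr uu x); apply: idealMl.
Qed.

Variables (J : nat -> A -> Prop) (L : nat) (x : nat -> A) (b : seq A).
Hypothesis chainJ : ideal_chain (ext_ideal m f) J L.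
Hypothesis x_new : forall i : nat, (i < L)%nat -> J i.+1 (x i) /\ ~ J i (x i).
Hypothesis Ib : indep m f m b.

Lemma chain_grid_indep : indep m f (ext_ideal m f) (grid L (size b) (fun i j => b`_j * x i)).
Proof.
have [idJ [J0E _]] := chainJ; set q := size b.
move=> c; rewrite (sum_grid _ _ _ (fun k => f (c k))) => /J0E Ic k.
rewrite size_grid => /grid_pos [lt_i lt_j ->].
set T := fun i => \sum_(j < q) f (c (i * q + j)%nat) * (b`_j * x i).
suff rows : forall l : nat, (l <= L)%nat -> J 0%nat (\sum_(i < l) T i) ->
    forall i : nat, (i < l)%nat -> forall j : nat, (j < q)%nat -> m (c (i * q + j)%nat).
  exact: rows L (leqnn L) Ic _ lt_i _ lt_j.
elim=> [// | l IH] lt_lL; rewrite big_ord_recr /= => J0l.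
have [_ notJx] := x_new lt_lL; set S := \sum_(i < l) T i in J0l.
have JlS : J l S.
  apply: (ideal_sum (idJ l) (F := T)) => i lt_il.
  apply: (ideal_sum (idJ l) (F := fun j => f (c (i * q + j)%nat) * (b`_j * x i))) => j _.
  rewrite mulrA; apply: (idealMl (idJ l)); apply: (chain_mono chainJ (i := i.+1)).
    by rewrite lt_il ltnW.
  exact: (x_new (ltn_trans lt_il lt_lL)).1.
have JlT : J l (T l).
  rewrite -(addKr S (T l)); apply: (idealD (idJ l)); first exact: (idealN (idJ l)).
  by apply: (chain_mono chainJ (i := 0%nat)) => //; rewrite leq0n ltnW.
have mT := @indep_mul (J l) b (x l) (fun j => c (l * q + j)%nat) (idJ l) Ib notJx JlT.
have J0T : J 0%nat (T l).
  apply/J0E; apply: (ideal_sum (ext_ideal_ideal Hm f)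
    (F := fun j => f (c (l * q + j)%nat) * (b`_j * x l))).
  by move=> j lt_jq; apply: ext_ideal_gen; apply: mT.
move=> i; rewrite ltnS leq_eqVlt => /predU1P [-> | lt_il] j lt_jq; first exact: mT.
apply: IH (ltnW lt_lL) _ i lt_il j lt_jq.
by have := idealB (idJ 0%nat) J0l J0T; rewrite addrK.
Qed.

End ChainBound.

Lemma chain_bound (A : comUnitRingType) (m : A -> Prop) (f : A -> A)
    (J : nat -> A -> Prop) (L : nat) (b s : seq A) :
  local_max m -> ring_map f -> ideal_chain (ext_ideal m f) J L ->
  indep m f m b -> gens_via f s -> (L * size b <= size s)%nat.
Proof.
move=> Hm hf chainJ Ib /gens_spanE Ss.
have [_ [_ [_ step]]] := chainJ.
have [x x_new] : exists x : nat -> A, forall i : nat, (i < L)%nat -> J i.+1 (x i) /\ ~ J i (x i).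
  apply: (ClassicalEpsilon.choice (fun i y => (i < L)%nat -> J i.+1 y /\ ~ J i y)) => i.
  by case: (ltnP i L) => [/step [_ [y]] | _]; [exists y | exists 0].
rewrite -(size_grid L (size b) (fun i j => b`_j * x i)).
apply: (steinitz Hm hf (ext_ideal_ideal Hm f) (@ext_ideal_gen _ m f)).
  by move=> k _; apply: (span_mono _ (Ss _)) => y ->; apply: ideal0 (ext_ideal_ideal Hm f).
exact: (chain_grid_indep Hm chainJ x_new Ib).
Qed.

Section Refinement.
Variables (A : comUnitRingType) (m : A -> Prop).
Hypothesis Hm : local_max m.

Definition adjoin (J : A -> Prop) (x y : A) : Prop := exists j a, J j /\ y = j + a * x.

Lemma adjoin_ideal J x : is_ideal J -> is_ideal (adjoin J x).
Proof.
move=> hJ; split; first by exists 0, 0; rewrite mul0r addr0; split => //; apply: ideal0.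
split=> [y1 y2 [j1 [a1 [J1 ->]]] [j2 [a2 [J2 ->]]] | r y [j [a [Jj ->]]]].
  by exists (j1 + j2), (a1 + a2); rewrite mulrDl addrACA; split => //; apply: idealD.
by exists (r * j), (r * a); rewrite mulrDr mulrA; split => //; apply: idealMl.
Qed.

Lemma adjoin_sub J x y : J y -> adjoin J x y.
Proof. by move=> Jy; exists y, 0; rewrite mul0r addr0. Qed.

Lemma adjoin_gen J x : is_ideal J -> adjoin J x x.
Proof. by move=> hJ; exists 0, 1; rewrite mul1r add0r; split => //; apply: ideal0. Qed.

Lemma adjoin_min (J K : A -> Prop) x : is_ideal K -> (forall y, J y -> K y) -> K x ->
  forall y, adjoin J x y -> K y.
Proof. by move=> hK JK Kx y [j [a [Jj ->]]]; apply: idealD => //; [apply: JK | apply: idealMl]. Qed.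

Definition strictly_between (J K L : A -> Prop) : Prop :=
  [/\ is_ideal K, (forall y, J y -> K y), (forall y, K y -> L y),
      (exists y, K y /\ ~ J y) & (exists y, L y /\ ~ K y)].

Definition simple_ext (J L : A -> Prop) : Prop :=
  exists x, (forall y, L y <-> adjoin J x y) /\ (forall z, m z -> J (z * x)).

Lemma refine_or_simple (J L : A -> Prop) : is_ideal J -> is_ideal L ->
  (forall y, J y -> L y) -> (exists x, L x /\ ~ J x) ->
  (exists K, strictly_between J K L) \/ simple_ext J L.
Proof.
move=> hJ hL JL [x [Lx notJx]]; have adjL := adjoin_min hL JL Lx.
case: (classic (exists y, L y /\ ~ adjoin J x y)) => [big | small].
  left; exists (adjoin J x); split => //; first exact: adjoin_ideal.
    exact: adjoin_sub.
  by exists x; split => //; apply: adjoin_gen.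
have LE : forall y, L y <-> adjoin J x y.
  by move=> y; split=> [Ly | /adjL //]; apply: NNPP => notA; apply: small; exists y.
case: (classic (exists2 z, m z & ~ J (z * x))) => [[z mz notJzx] | none]; last first.
  right; exists x; split => // z mz.
  by apply: NNPP => notJzx; apply: none; exists z.
left; exists (adjoin J (z * x)); split.
- exact: adjoin_ideal.
- exact: adjoin_sub.
- by apply: adjoin_min => //; apply: idealMl.
- by exists (z * x); split => //; apply: adjoin_gen.
exists x; split => //; case=> j [a [Jj xE]]; apply: notJx.
have uu : 1 - a * z \is a GRing.unit.
  by apply: (unit_1Bmax Hm); apply: (idealMl (max_ideal Hm)).
have jE : j = (1 - a * z) * x by rewrite mulrBl mul1r -mulrA {1}xE addrK.
by rewrite -(mulKr uu x) -jE; apply: idealMl.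
Qed.

Definition insert_ideal (J : nat -> A -> Prop) (i : nat) (K : A -> Prop) (k : nat) : A -> Prop :=
  if (k <= i)%nat then J k else if k == i.+1 then K else J k.-1.

Lemma insert_chain (I : A -> Prop) (J : nat -> A -> Prop) (L i : nat) (K : A -> Prop) :
  ideal_chain I J L -> (i < L)%nat -> strictly_between (J i) K (J i.+1) ->
  ideal_chain I (insert_ideal J i K) L.+1.
Proof.
move=> [idJ [J0E [JL step]]] lt_iL [idK JK KJ newK newJ]; rewrite /insert_ideal.
split; first by move=> k; case: ifP => _ //; case: ifP.
split; first by move=> x; rewrite leq0n.
split.
  move=> x; rewrite ifF; last by apply/negbTE; rewrite -ltnNge ltnS ltnW.
  by rewrite ifF //; apply/negbTE; rewrite eqSS neq_ltn lt_iL orbT.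
move=> k lt_kL; case: (ltngtP k i) => [lt_ki | lt_ik | ->]; last by rewrite ?ltnn ?leqnn eqxx.
  exact: step k (leq_trans lt_ki (ltnW lt_iL)).
rewrite eqSS (gtn_eqF lt_ik); case: (eqVneq k i.+1) => [-> // | neq_ki].
have lt_ik' : (i.+1 < k)%nat by rewrite ltn_neqAle eq_sym neq_ki.
by have := step k.-1; rewrite prednK ?(leq_ltn_trans (leq0n i) lt_ik) //=; apply.
Qed.

Lemma max_chain_simple (I : A -> Prop) (J : nat -> A -> Prop) (L : nat) :
  ideal_chain I J L -> (forall J' L', ideal_chain I J' L' -> (L' <= L)%nat) ->
  forall i : nat, (i < L)%nat -> simple_ext (J i) (J i.+1).
Proof.
move=> chainJ maxJ i lt_iL; have [idJ [_ [_ step]]] := chainJ; have [JJ newJ] := step i lt_iL.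
case: (refine_or_simple (idJ i) (idJ i.+1) JJ newJ) => [[K betweenK] | //].
by have := maxJ _ _ (insert_chain chainJ lt_iL betweenK); rewrite ltnn.
Qed.

End Refinement.

Lemma simple_chain_span (A : comUnitRingType) (m : A -> Prop) (f : A -> A) (b : seq A)
    (J : nat -> A -> Prop) (L : nat) :
  local_max m -> ring_map f -> (forall y, span f m b y) ->
  ideal_chain (ext_ideal m f) J L -> (forall i : nat, (i < L)%nat -> simple_ext m (J i) (J i.+1)) ->
  exists t : seq A, size t = (L * size b)%nat /\ forall y, span f (ext_ideal m f) t y.
Proof.
move=> Hm hf Sb [idJ [J0E [JL _]]] simpleJ; have hI := ext_ideal_ideal Hm f.
have [x x_gen] : exists x : nat -> A, forall i : nat, (i < L)%nat ->
    (forall y, J i.+1 y <-> adjoin (J i) (x i) y) /\ (forall z, m z -> J i (z * x i)).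
  apply: (ClassicalEpsilon.choice (fun i x => (i < L)%nat ->
    (forall y, J i.+1 y <-> adjoin (J i) x y) /\ (forall z, m z -> J i (z * x)))) => i.
  by case: (ltnP i L) => [/simpleJ [y Sy] | _]; [exists y | exists 0].
set q := size b; set t := grid L q (fun i j => b`_j * x i).
exists t; split; first exact: size_grid.
suff Jspan : forall l : nat, (l <= L)%nat -> forall y, J l y -> span f (ext_ideal m f) t y.
  by move=> y; apply: (Jspan L) => //; apply: JL.
elim=> [|l IH] lt_lL y; first by move/J0E; apply: span_ideal.
have [JE mx] := x_gen l lt_lL; case/JE=> j [a [Jj ->]].
apply: spanD => //; first exact: IH (ltnW lt_lL) _ Jj.
have [c Jc] := Sb a; rewrite -(subrK (\sum_(i < q) f (c i) * b`_i) a) mulrDl.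
apply: spanD => //; first by apply: IH (ltnW lt_lL) _ _; apply: mx.
rewrite mulr_suml; apply: (span_sum hf hI (F := fun i => f (c i) * b`_i * x l)) => i lt_iq.
rewrite -mulrA -(nth_grid (fun i j => b`_j * x i) lt_lL lt_iq).
by apply: spanZ => //; apply: span_nth => //; rewrite size_grid grid_pos_lt.
Qed.

Lemma ex_minimal (P : nat -> Prop) :
  (exists n, P n) -> exists n, P n /\ forall k, P k -> (n <= k)%nat.
Proof.
move=> exP; have [n [[Pn minn] _]] :=
  Wf_nat.dec_inh_nat_subset_has_unique_least_element P (fun n => classic (P n)) exP.
by exists n; split=> // k /minn /leP.
Qed.

Lemma ex_maximal (P : nat -> Prop) (B : nat) : (exists n, P n) ->
  (forall n, P n -> (n <= B)%nat) -> exists n, P n /\ forall k, P k -> (k <= n)%nat.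
Proof.
move=> [n0 Pn0] leB.
have PB : forall n, P n -> P (B - (B - n))%nat /\ (B - n <= B)%nat.
  by move=> n Pn; rewrite subKn; [split=> //; apply: leq_subr | apply: leB].
have [k [[Pk le_kB] mink]] :=
  ex_minimal (P := fun k => P (B - k)%nat /\ (k <= B)%nat) (ex_intro _ _ (PB n0 Pn0)).
by exists (B - k)%nat; split=> // n Pn; have := mink _ (PB n Pn); have := leB n Pn; lia.
Qed.

Lemma ex_least_size (T : Type) (P : seq T -> Prop) (s0 : seq T) :
  P s0 -> exists s, P s /\ forall s', P s' -> (size s <= size s')%nat.
Proof.
move=> Ps0; have [n [[s [sE Ps]] minn]] :=
  ex_minimal (P := fun n => exists s, size s = n /\ P s)
    (ex_intro _ _ (ex_intro _ s0 (conj erefl Ps0))).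
by exists s; split=> // s' Ps'; rewrite sE; apply: minn; exists s'.
Qed.

(* [least_size P n]: n is the least size of a sequence satisfying P.  Both
   [is_nu f] and [is_res_deg m f] are of this form. *)
Definition least_size (T : Type) (P : seq T -> Prop) (n : nat) : Prop :=
  (exists s, size s = n /\ P s) /\ (forall s, P s -> (n <= size s)%nat).

Lemma least_size_epsilon (T : Type) (P : seq T -> Prop) (s0 : seq T) :
  P s0 -> least_size P (epsilon (inhabits 0%nat) (least_size P)).
Proof.
move=> Ps0; have [s [Ps min_s]] := ex_least_size Ps0.
by apply: epsilon_spec; exists (size s); split=> //; exists s.
Qed.

Lemma nu_spec (A : comUnitRingType) (f : A -> A) : finite_map f -> is_nu f (nu f).
Proof. by move=> [g gen_g]; apply: (least_size_epsilon gen_g). Qed.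

Lemma proper_chain (A : comUnitRingType) (I : A -> Prop) : is_ideal I -> ~ I 1 ->
  ideal_chain I (fun k => if k == 0%nat then I else fun _ => True) 1.
Proof.
move=> idI notI1; split; first by move=> [|i] //=; split=> //.
by split=> //; split=> // [[|i]] //= _; split=> //; exists 1.
Qed.

Section NuLambda.
Variables (A : comUnitRingType) (m : A -> Prop).
Hypothesis Hm : local_max m.
Variable f : A -> A.
Hypotheses (hf : ring_map f) (floc : local_map m f) (hfin : finite_map f).
Variable b : seq A.
Hypotheses (Ib : indep m f m b) (Sb : forall y, span f m b y).

Lemma size_res_basis_gt0 : (0 < size b)%nat.
Proof.
case: b Sb => [|//] /(_ 1) [c]; rewrite big_ord0 subr0.
by move/(max_not1 Hm).
Qed.

Lemma chain_length_le_nu J L : ideal_chain (ext_ideal m f) J L -> (L <= nu f)%nat.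
Proof.
move=> chainJ; have [[s [<- gen_s]] _] := nu_spec hfin.
apply: leq_trans (chain_bound Hm hf chainJ Ib gen_s).
by rewrite leq_pmulr // size_res_basis_gt0.
Qed.

Lemma lambda_spec : is_length_quot (ext_ideal m f) (lambda m f).
Proof.
have hI := ext_ideal_ideal Hm f.
have notI1 : ~ ext_ideal m f 1 by move/(ext_ideal_max Hm floc); apply: max_not1.
have [L [[J chainJ] maxL]] := ex_maximal (P := fun L => exists J, ideal_chain (ext_ideal m f) J L)
  (ex_intro _ 1%nat (ex_intro (fun J => ideal_chain _ J 1) _ (proper_chain hI notI1)))
  (fun L '(ex_intro J chainJ) => chain_length_le_nu chainJ).
by apply: epsilon_spec; exists L; split=> [|J' L' chainJ']; [exists J | apply: maxL; exists J'].
Qed.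

Lemma nu_lambda : nu f = (lambda m f * size b)%nat.
Proof.
have [[J chainJ] maxJ] := lambda_spec; have [[s [sE gen_s]] min_s] := nu_spec hfin.
apply/eqP; rewrite eqn_leq; apply/andP; split.
  (* A maximal chain yields lambda * size b elements spanning modulo f(m)A. *)
  have [t [<- St]] := simple_chain_span Hm hf Sb chainJ (max_chain_simple Hm chainJ maxJ).
  exact: min_s _ (nakayama Hm hf gen_s St).
(* Conversely the chain bounds every generating set from below. *)
by rewrite -sE; apply: chain_bound chainJ Ib gen_s.
Qed.

End NuLambda.

Section Iterates.
Variables (A : comUnitRingType) (m : A -> Prop).
Hypothesis Hm : local_max m.
Variable phi : {rmorphism A -> A}.
Hypotheses (phi_loc : local_map m phi) (phi_fin : finite_map phi).

Let d := res_deg m phi.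

Lemma ring_map_phi : ring_map phi.
Proof. exact: (ring_map_iter phi 1). Qed.

Lemma local_map_iter n : local_map m (iter n phi).
Proof. by elim: n => [//|n IH] x mx /=; apply: phi_loc; apply: IH. Qed.

Lemma gens_iterD (p q : nat) (t s : seq A) : gens_via (iter p phi) t -> gens_via (iter q phi) s ->
  gens_via (iter (p + q) phi) (grid (size t) (size s) (fun i j => iter p phi s`_j * t`_i)).
Proof.
move=> /gens_spanE St /gens_spanE Ss; apply/gens_spanE => x.
have hp := ring_map_iter phi p; have hZ := zero_ideal_ideal A.
apply: (span_ext (f := fun y => iter p phi (iter q phi y))); first by move=> y; rewrite iterD.
have p0 : forall y a, zero_ideal y -> zero_ideal (iter p phi y * a).
  by move=> y a ->; rewrite ring_map0 // mul0r.
exact: (tower_span hp (ring_map_iter phi q) hZ p0 St Ss x).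
Qed.

Lemma finite_map_iter n : finite_map (iter n phi).
Proof.
elim: n => [|n [s gen_s]]; first by exists [:: 1] => x; exists (fun _ => x); rewrite big_ord1 mulr1.
have [t gen_t] := phi_fin; rewrite -add1n.
exact: ex_intro _ _ (gens_iterD (p := 1%nat) gen_t gen_s).
Qed.

Lemma nu_iter_submul (p q : nat) :
  (nu (iter (p + q) phi) <= nu (iter p phi) * nu (iter q phi))%nat.
Proof.
have [[t [<- gen_t]] _] := nu_spec (finite_map_iter p).
have [[s [<- gen_s]] _] := nu_spec (finite_map_iter q).
have [_ min_nu] := nu_spec (finite_map_iter (p + q)).
by rewrite -(size_grid _ _ (fun i j => iter p phi s`_j * t`_i)); apply: min_nu; apply: gens_iterD.
Qed.

Lemma nu_iter_gt0 n : (0 < nu (iter n phi))%nat.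
Proof.
have [[s [<- gen_s]] _] := nu_spec (finite_map_iter n).
by case: s gen_s => [|//] /(_ 1) [c]; rewrite big_ord0 => /eqP; rewrite oner_eq0.
Qed.

Lemma res_basis : exists b : seq A,
  [/\ size b = d, indep m phi m b & forall y, span phi m b y].
Proof.
have [g gen_g] := phi_fin.
have res_g : res_spans m phi g.
  move: gen_g => /gens_spanE gen_g x.
  by apply: (span_mono _ (gen_g x)) => y ->; apply: ideal0 (max_ideal Hm).
have [[b [bE Sb]] min_b] := least_size_epsilon res_g.
exists b; split=> //; apply: (minimal_span_indep Hm ring_map_phi (max_ideal Hm) Sb).
by move=> s' Ss'; rewrite bE; apply: min_b.
Qed.

Lemma res_basis_iter n : exists b : seq A,
  [/\ size b = expn d n, indep m (iter n phi) m b & forall y, span (iter n phi) m b y].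
Proof.
have [b1 [b1E I1 S1]] := res_basis.
elim: n => [|n [b [bE Ib Sb]]].
  exists [:: 1]; split=> // [c | x]; first by rewrite big_ord1 mulr1 => mc [|].
  by exists (fun _ => x); rewrite big_ord1 mulr1 subrr; apply: ideal0 (max_ideal Hm).
exists (grid (size b1) (size b) (fun i j => phi b`_j * b1`_i)); split.
- by rewrite size_grid b1E bE expnS.
- exact: (tower_indep ring_map_phi I1 Ib).
move=> x; apply: (tower_span ring_map_phi (ring_map_iter phi n) (max_ideal Hm)) => // y a my.
by apply: (idealMr (max_ideal Hm)); apply: phi_loc.
Qed.

Lemma nu_iter n : nu (iter n phi) = (lambda m (iter n phi) * expn d n)%nat.
Proof.
have [b [<- Ib Sb]] := res_basis_iter n.
exact: (nu_lambda Hm (ring_map_iter phi n) (local_map_iter n) (finite_map_iter n) Ib Sb).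
Qed.

Lemma res_deg_gt0 : (0 < d)%nat.
Proof. by have [b [<- _ Sb]] := res_basis; exact: (size_res_basis_gt0 Hm Sb). Qed.

Lemma lambda_iter_gt0 n : (0 < lambda m (iter n phi))%nat.
Proof. by have := nu_iter_gt0 n; rewrite nu_iter muln_gt0 => /andP []. Qed.

End Iterates.

Local Close Scope ring_scope.

Section RealFacts.
Local Open Scope R_scope.

Lemma ex_inf (u : nat -> R) (B : R) : (forall n, B <= u n) ->
  exists L, (forall n, L <= u n) /\ (forall B', (forall n, B' <= u n) -> B' <= L).
Proof.
move=> lbB; set E := fun x => exists n, x = - u n.
have bdE : bound E by exists (- B) => x [n ->]; have := lbB n; lra.
have [M [ubM lubM]] := completeness E bdE (ex_intro _ _ (ex_intro _ 0%nat erefl)).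
exists (- M); split=> [n | B' lbB'].
  by have := ubM _ (ex_intro _ n erefl); lra.
have : M <= - B' by apply: lubM => x [n ->]; have := lbB' n; lra.
lra.
Qed.

Lemma div_succ_small (C eps : R) : 0 < eps -> 0 <= C ->
  exists N : nat, forall n : nat, (N <= n)%nat -> C / INR n.+1 < eps.
Proof.
move=> eps_gt0 C_ge0; have epsC_gt0 : 0 < eps / (C + 1) by apply: Rdiv_lt_0_compat; lra.
have [N [invN N_gt0]] := archimed_cor1 _ epsC_gt0.
exists N => n /leP le_Nn.
have N_gt0R : 0 < INR N by apply: lt_0_INR.
have le_N : INR N <= INR n.+1 by apply: le_INR; lia.
have : C / INR n.+1 <= (C + 1) * / INR N.
  apply: Rmult_le_compat; try lra; first by apply: Rlt_le; apply: Rinv_0_lt_compat; lra.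
  by apply: Rinv_le_contravar.
have : (C + 1) * / INR N < (C + 1) * (eps / (C + 1)) by apply: Rmult_lt_compat_l; lra.
have -> : (C + 1) * (eps / (C + 1)) = eps by field; lra.
lra.
Qed.

Lemma ln_le (x y : R) : 0 < x -> x <= y -> ln x <= ln y.
Proof.
move=> x_gt0 /Rle_lt_or_eq_dec [lt_xy | ->]; last exact: Rle_refl.
by apply: Rlt_le; apply: ln_increasing.
Qed.

Lemma INR_gt0 (n : nat) : (0 < n)%nat -> 0 < INR n.
Proof. by move=> n_gt0; apply: lt_0_INR; apply/ltP. Qed.

Lemma INR_expn (d k : nat) : INR (expn d k) = INR d ^ k.
Proof. by elim: k => [|k IH]; rewrite ?expn0 // expnS mult_INR IH. Qed.

Lemma Un_cv_sub_const (u : nat -> R) (L c : R) :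
  Un_cv u L -> Un_cv (fun n => u n - c) (L - c).
Proof.
move=> cvu eps eps_gt0; have [N conv] := cvu eps eps_gt0; exists N => n le_Nn.
by rewrite /R_dist (_ : u n - c - (L - c) = u n - L); [apply: conv | ring].
Qed.

End RealFacts.

Section Fekete.
Local Open Scope R_scope.
Variable a : nat -> R.
Hypotheses (a_ge0 : forall n, 0 <= a n) (a_subadd : forall p q, a (p + q)%nat <= a p + a q).

Lemma subadd_iter (K r q : nat) : a (q * K + r)%nat <= INR q * a K + a r.
Proof.
elim: q => [|q IH]; first by rewrite mul0n add0n /=; lra.
rewrite mulSn -addnA S_INR; apply: Rle_trans (a_subadd _ _) _; lra.
Qed.

(* Writing n + 1 = q K + r with 1 <= r <= K:
   a(n+1) <= (n+1) a(K)/K + K a(1). *)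
Lemma subadd_bound (K n : nat) : (0 < K)%nat ->
  a n.+1 <= INR n.+1 * (a K / INR K) + INR K * a 1%nat.
Proof.
move=> K_gt0; set q := (n %/ K)%nat; set r := (n %% K)%nat.
have nE : n.+1 = (q * K + r.+1)%nat by rewrite /q /r addnS -divn_eq.
have Kpos : 0 < INR K by apply: INR_gt0.
have ar : a r.+1 <= INR K * a 1%nat.
  have := subadd_iter 1 1 r; rewrite muln1 addn1.
  have : INR r.+1 <= INR K by apply: le_INR; apply/leP; rewrite ltn_mod.
  by rewrite S_INR; have := a_ge0 1; nra.
have qK : INR q * INR K <= INR n.+1.
  by rewrite -mult_INR; apply: le_INR; apply/leP; rewrite nE leq_addr.
have qaK : INR q * a K <= INR n.+1 * (a K / INR K).
  have -> : INR q * a K = INR q * INR K * (a K / INR K) by field; lra.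
  apply: Rmult_le_compat_r => //; apply: Rmult_le_pos => //.
  by apply: Rlt_le; apply: Rinv_0_lt_compat.
by rewrite {1}nE; apply: Rle_trans (subadd_iter K r.+1 q) _; lra.
Qed.


Lemma fekete : exists L, Un_cv (fun n => a n.+1 / INR n.+1) L /\
  (forall n, L <= a n.+1 / INR n.+1) /\
  (forall B, (forall n, B <= a n.+1 / INR n.+1) -> B <= L).
Proof.
set u := fun n => a n.+1 / INR n.+1.
have n1pos : forall n, 0 < INR n.+1 by move=> n; apply: lt_0_INR; lia.
have u_ge0 : forall n, 0 <= u n.
  by move=> n; apply: Rmult_le_pos => //; apply/Rlt_le/Rinv_0_lt_compat.
have [L [infL glbL]] := ex_inf u_ge0.
exists L; split=> // eps eps_gt0.
have [k uk] : exists k, u k < L + eps / 2.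
  apply: NNPP => none; have : L + eps / 2 <= L; last lra.
  by apply: glbL => n; apply: Rnot_lt_le => lt_n; apply: none; exists n.
have C_ge0 : 0 <= INR k.+1 * a 1%nat by apply: Rmult_le_pos; [apply: pos_INR | apply: a_ge0].
have [N smallN] := div_succ_small (eps := eps / 2) ltac:(lra) C_ge0.
exists N => n /leP le_Nn; rewrite /R_dist Rabs_right; last by have := infL n; lra.
have : u n <= u k + INR k.+1 * a 1%nat / INR n.+1.
  have -> : u k + INR k.+1 * a 1%nat / INR n.+1 = (INR n.+1 * u k + INR k.+1 * a 1%nat) / INR n.+1.
    by field; apply: Rgt_not_eq.
  apply: Rmult_le_compat_r; first exact/Rlt_le/Rinv_0_lt_compat.
  exact: (subadd_bound (K := k.+1) n (ltn0Sn k)).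
by have := smallN n le_Nn; lra.
Qed.

End Fekete.

Section LogIterates.
Local Open Scope R_scope.
Variables (A : comUnitRingType) (m : A -> Prop).
Hypothesis Hm : local_max m.
Variable phi : {rmorphism A -> A}.
Hypotheses (phi_loc : local_map m phi) (phi_fin : finite_map phi).

Let log_nu n := ln (INR (nu (iter n phi))).

Lemma log_nu_ge0 n : 0 <= log_nu n.
Proof.
rewrite /log_nu -ln_1; apply: ln_le; first lra.
by apply: (le_INR 1); apply/leP; apply: nu_iter_gt0.
Qed.

Lemma log_nu_subadd p q : log_nu (p + q)%nat <= log_nu p + log_nu q.
Proof.
have gt0 := fun n => INR_gt0 (nu_iter_gt0 phi_fin n).
rewrite /log_nu -ln_mult // -mult_INR; apply: ln_le => //.
by apply: le_INR; apply/leP; apply: nu_iter_submul.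
Qed.

Lemma log_lambda_iter n :
  ln (INR (lambda m (iter n phi))) = log_nu n - INR n * ln (INR (res_deg m phi)).
Proof.
have d_gt0 := INR_gt0 (res_deg_gt0 Hm phi_fin).
rewrite /log_nu (nu_iter Hm phi_loc phi_fin) mult_INR INR_expn.
rewrite ln_mult ?ln_pow //; first ring.
  exact: INR_gt0 (lambda_iter_gt0 Hm phi_loc phi_fin n).
exact: pow_lt.
Qed.

Lemma log_lambda_div n :
  ln (INR (lambda m (iter n.+1 phi))) / INR n.+1
  = log_nu n.+1 / INR n.+1 - ln (INR (res_deg m phi)).
Proof.
have n1_gt0 : INR n.+1 <> 0 by apply: Rgt_not_eq; apply: INR_gt0.
by rewrite log_lambda_iter; field.
Qed.

End LogIterates.

Theorem mainTheorem4 (A : comUnitRingType) (m : A -> Prop)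
  (phi : {rmorphism A -> A}) :
  noetherian A -> local_max m -> local_map m phi -> finite_map phi ->
  exists nu_inf h_alg : R,
    (* the sequence log nu(phi^n_* A) / n, n >= 1, converges to nu_inf *)
    Un_cv (fun n => (ln (INR (nu (iter n.+1 phi))) / INR n.+1)%R) nu_inf /\
    (* nu_inf is its infimum *)
    (forall n, (nu_inf <= ln (INR (nu (iter n.+1 phi))) / INR n.+1)%R) /\
    (forall b, (forall n, (b <= ln (INR (nu (iter n.+1 phi))) / INR n.+1)%R) ->
       (b <= nu_inf)%R) /\
    (* h_alg(phi, A) = lim (1/n) log lambda(phi^n) *)
    Un_cv (fun n => (ln (INR (lambda m (iter n.+1 phi))) / INR n.+1)%R) h_alg /\
    nu_inf = (ln (INR (res_deg m phi)) + h_alg)%R.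
Proof.
move=> _ Hm phi_loc phi_fin; set log_d := ln (INR (res_deg m phi)).
have [L [cvL [infL glbL]]] := fekete (log_nu_ge0 phi_fin) (log_nu_subadd phi_fin).
exists L, (L - log_d)%R; do 3!split=> //; split; last by rewrite Rplus_minus.
apply: Un_cv_ext (Un_cv_sub_const log_d cvL) => n.
by rewrite (log_lambda_div Hm phi_loc phi_fin).
Qed.
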